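(* If $n>2$ and $n\equiv 2 \pmod 4$, then $IK_n$ is not a $G$-graph.
   Context: $K_n$ is the complete simple graph on $n$ vertices and $IK_n$ its incidence graph (the simple graph whose vertices are the vertices and edges of $K_n$, each edge adjacent exactly to its two end-points). For a group $G$ and a multiset $S$ of elements of $G$, $\Phi(G,S)$ is the multigraph whose vertex set is the union over the members $s$ of $S$ (with multiplicity) of the right cosets $\langle s\rangle x$, $x\in G$, with one edge labeled $g$ between $\langle s\rangle x$ and $\langle t\rangle y$ ($s,t$ distinct members of $S$) for each $g\in\langle s\rangle x\cap\langle t\rangle y$, and no other edges; a $G$-graph is a multigraph isomorphic (ignoring labels) to some $\Phi(G,S)$. *)

From mathcomp Require Import all_boot all_fingroup.
Set Implicit Arguments. Unset Strict Implicit. Unset Printing Implicit Defensive.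
Import GroupScope.
Local Open Scope group_scope.

(* Vertices: inl a = vertex a of K_n; inr e = edge e of K_n (a 2-subset). *)
Definition IK_vert (n : nat) := ('I_n + {set 'I_n})%type.

Definition IK_valid (n : nat) (v : IK_vert n) : bool :=
  match v with inl _ => true | inr e => #|e| == 2 end.

Definition IK_mult (n : nat) (u v : IK_vert n) : nat :=
  match u, v with
  | inl a, inr e => a \in e
  | inr e, inl a => a \in e
  | _, _ => false
  end.

(* G is the finite group gT (whole group), S a multiset given as a sequence
   (listing members with multiplicity; order irrelevant).  A vertex is a pair
   (i, C) where i indexes a member s_i of S and C is a right coset <s_i> x;
   the vertex set is the disjoint union over members of S. *)
Definition Phi_vert (gT : finGroupType) (S : seq gT)
    (w : 'I_(size S) * {set gT}) : bool :=
  w.2 \in rcosets <[nth 1 S w.1]> [set: gT].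

Definition Phi_mult (gT : finGroupType) (S : seq gT)
    (w w' : 'I_(size S) * {set gT}) : nat :=
  if w.1 != w'.1 then #|w.2 :&: w'.2| else 0.

Definition IK_iso_Phi (n : nat) (gT : finGroupType) (S : seq gT) : Prop :=
  exists f : IK_vert n -> 'I_(size S) * {set gT},
    [/\ {in IK_valid (n:=n) &, injective f},
        (forall v, IK_valid v -> Phi_vert (f v)),
        (forall w, Phi_vert w -> exists2 v, IK_valid v & f v = w) &
        {in IK_valid (n:=n) &, forall u v, Phi_mult (f u) (f v) = IK_mult u v}].

Definition IK_is_G_graph (n : nat) : Prop :=
  exists (gT : finGroupType) (S : seq gT), IK_iso_Phi n S.

From mathcomp Require Import all_boot all_fingroup.
From mathcomp Require Import zify.
Set Implicit Arguments. Unset Strict Implicit. Unset Printing Implicit Defensive.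

(** Suppose IK_n ~ Phi(G,S).  IK_n is bipartite, so S has two members s and t
  (three members would give the triangle of cosets <s_k> through 1), the
  vertices of K_n being the n cosets of <s> and its edges the C(n,2) cosets of
  <t>.  Let sgn g be the sign of the right translation x |-> x g; it is a
  homomorphism to Z/2 and sgn g = |G| + [G : <g>] mod 2, as the cycles of the
  translation are the left cosets of <g>.  For n = 2 mod 4, n is even and
  C(n,2) is odd, hence sgn s = 0 and sgn t = 1.  So sgn is constant on each
  vertex coset, and two adjacent vertices of K_n get different values, since
  the coset of the edge ab passes from the coset of a to that of b by a left
  multiplication by t.  This properly 2-colours K_n, impossible for n >= 3. *)

Lemma odd_bin2_mod4 n : n %% 4 = 2 -> odd 'C(n, 2).
Proof.
move=> n_mod4; rewrite bin2 (divn_eq n 4) n_mod4.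
move: (n %/ 4) => q.
have -> : (q * 4 + 2) * (q * 4 + 2).-1 = (2 * (4 * q * q + 3 * q) + 1).*2.
  rewrite -mul2n (_ : (q * 4 + 2).-1 = q * 4 + 1); [nia | lia].
by rewrite doubleK addn1 /= oddM.
Qed.

Lemma ord_le2_neq_eq k (x y z : 'I_k) : k <= 2 -> x != y -> y != z -> x = z.
Proof.
move=> k_le2; rewrite -!(inj_eq val_inj) => xy yz; apply/val_inj.
by move: xy yz; case: x y z => [x ?] [y ?] [z ?] /=; lia.
Qed.

Lemma IK_no_triangle n (u v w : IK_vert n) :
  0 < IK_mult u v -> 0 < IK_mult v w -> 0 < IK_mult u w -> False.
Proof. by case: u => ?; case: v => ?; case: w => ?. Qed.

Import GroupScope.
Local Open Scope group_scope.

Lemma Phi_vert_rcoset (gT : finGroupType) (S : seq gT) (i : 'I_(size S)) x :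
  Phi_vert (i, <[nth 1 S i]> :* x).
Proof. by rewrite /Phi_vert /= -rcosetE; apply: imset_f; rewrite inE. Qed.

Section RightTranslationSign.
Variable gT : finGroupType.
Implicit Types g h x : gT.

Definition rmul_perm g : {perm gT} := perm (mulIg g).
Definition sgn_rmul g := odd_perm (rmul_perm g).

Lemma rmul_permM g h : rmul_perm (g * h) = rmul_perm g * rmul_perm h.
Proof. by apply/permP => x; rewrite permM !permE /= mulgA. Qed.

Lemma sgn_rmulM g h : sgn_rmul (g * h) = sgn_rmul g (+) sgn_rmul h.
Proof. by rewrite /sgn_rmul rmul_permM odd_permM. Qed.

Lemma sgn_rmul1 : sgn_rmul 1 = false.
Proof. by have := sgn_rmulM 1 1; rewrite mulg1 addbb. Qed.

Lemma sgn_rmulX g k : sgn_rmul g = false -> sgn_rmul (g ^+ k) = false.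
Proof.
by move=> sg0; elim: k => [|k IHk]; rewrite ?sgn_rmul1 // expgS sgn_rmulM sg0.
Qed.

Lemma rmul_permX g k x : (rmul_perm g ^+ k) x = x * g ^+ k.
Proof.
elim: k => [|k IHk]; first by rewrite !expg0 perm1 mulg1.
by rewrite expgSr permM IHk permE /= expgSr mulgA.
Qed.

Lemma porbit_rmul_perm g x : porbit (rmul_perm g) x = x *: <[g]>.
Proof.
apply/setP => y; apply/porbitP/lcosetP => [[k ->] | [z /cycleP[k ->] ->]].
  by exists (g ^+ k); rewrite ?mem_cycle // rmul_permX.
by exists k; rewrite rmul_permX.
Qed.

Lemma porbits_rmul_perm g : porbits (rmul_perm g) = lcosets <[g]> [set: gT].
Proof.
apply/setP => C; apply/imsetP/imsetP => [] [x _ ->]; exists x => //;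
  by rewrite porbit_rmul_perm lcosetE.
Qed.

Lemma sgn_rmulE g : sgn_rmul g = odd #|gT| (+) odd #|[set: gT] : <[g]>|.
Proof. by rewrite /sgn_rmul /odd_perm porbits_rmul_perm card_lcosets. Qed.

Lemma sgn_rmul_rcoset s x y :
  sgn_rmul s = false -> y \in <[s]> :* x -> sgn_rmul y = sgn_rmul x.
Proof.
by move=> s0 /rcosetP[z /cycleP[k ->] ->]; rewrite sgn_rmulM sgn_rmulX.
Qed.

End RightTranslationSign.

Section IncidenceGraphIso.
Variables (n : nat) (gT : finGroupType) (S : seq gT).
Variable f : IK_vert n -> 'I_(size S) * {set gT}.
Hypothesis f_inj : {in IK_valid (n:=n) &, injective f}.
Hypothesis f_vert : forall v, IK_valid v -> Phi_vert (f v).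
Hypothesis f_onto : forall w, Phi_vert w -> exists2 v, IK_valid v & f v = w.
Hypothesis f_mult :
  {in IK_valid (n:=n) &, forall u v, Phi_mult (f u) (f v) = IK_mult u v}.

Local Notation gen_of v := (nth 1 S (f v).1).

Lemma f_rcoset v : IK_valid v -> exists x, (f v).2 = <[gen_of v]> :* x.
Proof. by move/f_vert/imsetP => [x _ ->]; exists x; rewrite rcosetE. Qed.

Lemma f_eq v w : IK_valid v -> IK_valid w ->
  (f v).1 = (f w).1 -> (f v).2 = (f w).2 -> v = w.
Proof.
move=> vv vw E1 E2; apply: f_inj => //.
by rewrite [f v]surjective_pairing [f w]surjective_pairing E1 E2.
Qed.

Lemma f_adj_type_neq u v : IK_valid u -> IK_valid v ->
  0 < IK_mult u v -> (f u).1 != (f v).1.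
Proof. by move=> vu vv; rewrite -f_mult // /Phi_mult; case: ifP. Qed.

Lemma size_members_le2 : size S <= 2.
Proof.
rewrite leqNgt; apply/negP => S_gt2.
pose w (i : 'I_(size S)) := (i, <[nth 1 S i]> :* 1).
have adj_w i j : i != j -> 0 < Phi_mult (w i) (w j).
  move=> ij; rewrite /Phi_mult /= ij; apply/card_gt0P; exists 1.
  by rewrite inE !rcoset1 !group1.
have S_gt0 : 0 < size S by lia.
have S_gt1 : 1 < size S by lia.
have [v0 v0v fv0] := f_onto (Phi_vert_rcoset (Ordinal S_gt0) 1).
have [v1 v1v fv1] := f_onto (Phi_vert_rcoset (Ordinal S_gt1) 1).
have [v2 v2v fv2] := f_onto (Phi_vert_rcoset (Ordinal S_gt2) 1).
apply: (@IK_no_triangle n v0 v1 v2); rewrite -f_mult // ?fv0 ?fv1 ?fv2;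
  exact: adj_w.
Qed.

Lemma type_vertex a b : (f (inl a)).1 = (f (inl b)).1.
Proof.
have [-> // | ab] := eqVneq a b.
pose e := [set a; b]; have ve : #|e| == 2 by rewrite cards2 ab.
apply: (@ord_le2_neq_eq _ _ (f (inr e)).1) => //; first exact: size_members_le2.
  by apply: f_adj_type_neq; rewrite //= !inE eqxx.
by rewrite eq_sym; apply: f_adj_type_neq; rewrite //= !inE eqxx orbT.
Qed.

Lemma type_vertex_edge a (e : {set 'I_n}) :
  #|e| == 2 -> (f (inl a)).1 != (f (inr e)).1.
Proof.
move=> ve; have /card_gt0P[b be] : 0 < #|e| by rewrite (eqP ve).
by rewrite (type_vertex a b); apply: f_adj_type_neq; rewrite //= be.
Qed.

Lemma type_edge (e e' : {set 'I_n}) :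
  #|e| == 2 -> #|e'| == 2 -> (f (inr e)).1 = (f (inr e')).1.
Proof.
move=> ve ve'; have /card_gt0P[a _] : 0 < #|e| by rewrite (eqP ve).
apply: (@ord_le2_neq_eq _ _ (f (inl a)).1).
- exact: size_members_le2.
- by rewrite eq_sym type_vertex_edge.
- exact: type_vertex_edge.
Qed.

Lemma index_type k (P : {set IK_vert n}) :
    {subset P <= IK_valid (n:=n)} ->
    {in IK_valid (n:=n), forall v, ((f v).1 == k) = (v \in P)} ->
  #|[set: gT] : <[nth 1 S k]>| = #|P|.
Proof.
move=> P_valid typeP.
have typeE v : v \in P -> (f v).1 = k.
  by move=> Pv; apply/eqP; rewrite typeP ?P_valid.
have cosetsE : rcosets <[nth 1 S k]> [set: gT] = [set (f v).2 | v in P].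
  apply/setP => C; apply/imsetP/imsetP => [[x _ ->] | [v Pv ->]].
    have [v vv fv] := f_onto (Phi_vert_rcoset k x).
    by exists v; rewrite -?typeP // fv ?rcosetE /=.
  by have := f_vert (P_valid _ Pv); rewrite /Phi_vert typeE // => /imsetP.
rewrite /indexg cosetsE card_in_imset // => v w Pv Pw.
by apply: f_eq; rewrite ?typeE //; apply: P_valid.
Qed.

Lemma index_vertex a : #|[set: gT] : <[gen_of (inl a)]>| = n.
Proof.
rewrite (@index_type _ [set inl b | b : 'I_n]) ?card_imset ?card_ord //.
- by move=> u v [].
- by move=> v /imsetP[b _ ->].
- move=> [b | e] ve; first by rewrite (type_vertex b a) eqxx imset_f.
  rewrite eq_sym (negbTE (type_vertex_edge a ve)).
  by apply/esym/imsetP => -[].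
Qed.

Lemma index_edge (e : {set 'I_n}) : #|e| == 2 ->
  #|[set: gT] : <[gen_of (inr e)]>| = 'C(n, 2).
Proof.
move=> ve; pose E := [set e' : {set 'I_n} | #|e'| == 2].
rewrite (@index_type _ [set inr e' | e' in E]) ?card_imset //.
- by rewrite card_draws card_ord.
- by move=> u v [].
- by move=> v /imsetP[e' Ee' ->]; rewrite inE in Ee'.
- move=> [a | e'] ve'; last by rewrite (type_edge ve' ve) eqxx imset_f // inE.
  rewrite (negbTE (type_vertex_edge a ve)).
  by apply/esym/imsetP => -[].
Qed.

Lemma meet_vertex_edge a (e : {set 'I_n}) : #|e| == 2 ->
  #|(f (inl a)).2 :&: (f (inr e)).2| = (a \in e).
Proof.
move=> ve; rewrite -[RHS]/(IK_mult (inl a) (inr e)) -f_mult //.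
by rewrite /Phi_mult type_vertex_edge.
Qed.

Lemma vertex_coset_eq (a b : 'I_n) x :
  x \in (f (inl a)).2 -> x \in (f (inl b)).2 -> a = b.
Proof.
have cosetE c : x \in (f (inl c)).2 -> (f (inl c)).2 = <[gen_of (inl a)]> :* x.
  have [y ->] := @f_rcoset (inl c) isT.
  by rewrite (type_vertex c a) => /rcoset_eqP ->.
move=> /cosetE x_a /cosetE x_b.
suff [->] : inl a = inl b :> IK_vert n by [].
by apply: (@f_eq (inl a) (inl b) isT isT (type_vertex a b)); rewrite x_a x_b.
Qed.

Lemma mem_vertex_coset (a : 'I_n) x : exists b, x \in (f (inl b)).2.
Proof.
have [[b | e] ve fv] := f_onto (Phi_vert_rcoset (f (inl a)).1 x).
  by exists b; rewrite fv rcoset_refl.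
by have := type_vertex_edge a ve; rewrite fv /= eqxx.
Qed.

Lemma edge_coset_step (a b : 'I_n) : a != b ->
  exists2 g, g \in (f (inl a)).2 &
    gen_of (inr [set a; b]) * g \in (f (inl b)).2.
Proof.
move=> ab; have ve : #|[set a; b]| == 2 by rewrite cards2 ab.
set t := gen_of _.
have := meet_vertex_edge a ve; rewrite !inE eqxx /= => /eqP/cards1P[g meet_a].
have /setIP[g_a g_e] : g \in (f (inl a)).2 :&: (f (inr [set a; b])).2.
  by rewrite meet_a set11.
have coset_e : (f (inr [set a; b])).2 = <[t]> :* g.
  by have [y Ey] := @f_rcoset (inr [set a; b]) ve; rewrite Ey in g_e *;
    apply/esym/rcoset_eqP.
have tg_e : t * g \in (f (inr [set a; b])).2.
  by rewrite coset_e; apply/rcosetP; exists t; rewrite ?cycle_id.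
exists g => //; have [c tg_c] := mem_vertex_coset a (t * g).
have : 0 < #|(f (inl c)).2 :&: (f (inr [set a; b])).2|.
  by apply/card_gt0P; exists (t * g); rewrite inE tg_c.
rewrite meet_vertex_edge // lt0b !inE => /orP[/eqP ca | /eqP <- //].
(* t g in the coset of a forces t = 1, making the edge coset {g}, which
   would then meet the coset of b as well. *)
have t1 : t = 1.
  have : t * g \in [set g] by rewrite -meet_a inE tg_e -ca tg_c.
  by rewrite inE -{2}[g]mul1g => /eqP/mulIg.
have := meet_vertex_edge b ve; rewrite !inE eqxx orbT => /eqP/cards1P[z meet_b].
have /setIP[z_b] : z \in (f (inl b)).2 :&: (f (inr [set a; b])).2.
  by rewrite meet_b set11.
rewrite coset_e t1 cycle1 mul1g => /set1P z_g.
by rewrite z_g in z_b; rewrite (vertex_coset_eq g_a z_b) eqxx in ab.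
Qed.

Lemma sgn_rmul_vertex (a : 'I_n) x y : sgn_rmul (gen_of (inl a)) = false ->
  x \in (f (inl a)).2 -> y \in (f (inl a)).2 -> sgn_rmul x = sgn_rmul y.
Proof.
move=> s0; have [z ->] := @f_rcoset (inl a) isT.
by move=> /(sgn_rmul_rcoset s0) -> /(sgn_rmul_rcoset s0) ->.
Qed.

Lemma sgn_rmul_adj (a b : 'I_n) x y :
    (forall c, sgn_rmul (gen_of (inl c)) = false) ->
    sgn_rmul (gen_of (inr [set a; b])) = true ->
    a != b -> x \in (f (inl a)).2 -> y \in (f (inl b)).2 ->
  sgn_rmul x != sgn_rmul y.
Proof.
move=> s0 t1 ab x_a y_b; have [g g_a tg_b] := edge_coset_step ab.
rewrite (sgn_rmul_vertex (s0 a) x_a g_a) (sgn_rmul_vertex (s0 b) y_b tg_b).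
by rewrite sgn_rmulM t1; case: (sgn_rmul g).
Qed.

Lemma no_IK_iso_Phi_mod4 : 2 < n -> n %% 4 = 2 -> False.
Proof.
move=> n_gt2 n_mod4.
have n_even : odd n = false by rewrite (divn_eq n 4) n_mod4 oddD oddM andbF.
have n_gt0 : 0 < n by lia.
have n_gt1 : 1 < n by lia.
pose a0 := Ordinal n_gt0; pose a1 := Ordinal n_gt1; pose a2 := Ordinal n_gt2.
have oddG : odd #|gT| = false.
  rewrite -cardsT -(Lagrange (subsetT <[gen_of (inl a0)]>)).
  by rewrite index_vertex oddM n_even andbF.
have s0 c : sgn_rmul (gen_of (inl c)) = false.
  by rewrite sgn_rmulE oddG index_vertex n_even.
have t1 (a b : 'I_n) : a != b -> sgn_rmul (gen_of (inr [set a; b])) = true.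
  by move=> ab; rewrite sgn_rmulE oddG index_edge ?cards2 ?ab // odd_bin2_mod4.
have pt c : exists x, x \in (f (inl c)).2.
  by have [x ->] := @f_rcoset (inl c) isT; exists x; rewrite rcoset_refl.
have [[x0 x0_a] [x1 x1_a] [x2 x2_a]] := And3 (pt a0) (pt a1) (pt a2).
have := sgn_rmul_adj s0 (t1 a0 a1 isT) isT x0_a x1_a.
have := sgn_rmul_adj s0 (t1 a0 a2 isT) isT x0_a x2_a.
have := sgn_rmul_adj s0 (t1 a1 a2 isT) isT x1_a x2_a.
by case: (sgn_rmul x0); case: (sgn_rmul x1); case: (sgn_rmul x2).
Qed.

End IncidenceGraphIso.

Theorem corollary3 (n : nat) : 2 < n -> n %% 4 = 2 -> ~ IK_is_G_graph n.
Proof.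
move=> n_gt2 n_mod4 [gT [S [f [f_inj f_vert f_onto f_mult]]]].
exact: (no_IK_iso_Phi_mod4 f_inj f_vert f_onto f_mult n_gt2 n_mod4).
Qed.
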